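(* Let $\Gamma_1=(V_1,m_1,\tau_1)$ and $\Gamma_2=(V_2,m_2,\tau_2)$ be weak $W$-graphs such that $\mathbb{C}V_1$ and $\mathbb{C}V_2$ are isomorphic representations of $W$. Then $\Gamma_1$ and $\Gamma_2$ have the same $\tau$-invariant, i.e. $\{\tau_1(v):v\in V_1\}=\{\tau_2(v):v\in V_2\}$.
   Context: $W$ is a Weyl group with a fixed set $\Delta$ of simple roots; for a root $\alpha$, $s_\alpha$ is the reflection in the hyperplane orthogonal to $\alpha$. A weak $W$-graph is a triple $\Gamma=(V,m,\tau)$ where $V$ is a finite set, $m:V\times V\to\mathbb{C}$ is a map, and $\tau$ is a map from $V$ to the power set of $\Delta$, such that the linear maps $s_\alpha:\mathbb{C}V\to\mathbb{C}V$ ($\alpha\in\Delta$) given on basis vectors by $s_\alpha(v)=-v$ if $\alpha\in\tau(v)$ and $s_\alpha(v)=v-\sum_{u\in V,\ \alpha\in\tau(u)} m(u,v)u$ if $\alpha\notin\tau(v)$ define a representation of $W$ on $\mathbb{C}V$. The $\tau$-invariant of $\Gamma$ is the image of $\tau$, the set $\{\tau(v): v\in V\}$. *)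

From HB Require Import structures.
From mathcomp Require Import all_boot all_order all_algebra all_fingroup.
From mathcomp Require Import mxrepresentation.
From mathcomp Require Import complex reals.
Set Implicit Arguments. Unset Strict Implicit. Unset Printing Implicit Defensive.
Import Order.TTheory GRing.Theory Num.Theory.
Local Open Scope ring_scope.

Definition dotv (R : realType) (n : nat) (x y : 'rV[R]_n) : R := (x *m y^T) 0 0.

(* Matrix (acting on row vectors, x |-> x *m reflmx a) of the reflection in
   the hyperplane orthogonal to a:  x |-> x - 2 (x,a)/(a,a) a. *)
Definition reflmx (R : realType) (n : nat) (a : 'rV[R]_n) : 'M[R]_n :=
  1%:M - (2 / dotv a a) *: (a^T *m a).

Definition is_root_system (R : realType) (n : nat) (Phi : seq 'rV[R]_n) : Prop :=
  [/\ 0 \notin Phi,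
      (forall a b, a \in Phi -> b \in Phi -> b *m reflmx a \in Phi),
      (forall a b, a \in Phi -> b \in Phi ->
         exists z : int, 2 * dotv b a / dotv a a = z%:~R),
      (forall a (c : R), a \in Phi -> c *: a \in Phi -> c = 1 \/ c = -1) &
      (forall x : 'rV[R]_n, (forall a, a \in Phi -> dotv x a = 0) -> x = 0)].

Definition is_base (R : realType) (n : nat) (Phi : seq 'rV[R]_n)
    (D : finType) (r : D -> 'rV[R]_n) : Prop :=
  [/\ (forall a, r a \in Phi),
      (forall c : D -> R, \sum_(a : D) c a *: r a = 0 -> forall a, c a = 0) &
      (forall b, b \in Phi -> exists c : D -> int,
          b = \sum_(a : D) (c a)%:~R *: r a /\
          ((forall a, 0 <= c a) \/ (forall a, c a <= 0)))].

Definition is_Weyl_group (gT : finGroupType) (W : {group gT})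
    (D : finType) (s : D -> gT) : Prop :=
  [/\ (forall a, s a \in W),
      W :=: <<[set s a | a : D]>>%g &
      exists (R : realType) (n : nat) (Phi : seq 'rV[R]_n) (r : D -> 'rV[R]_n)
             (rho : mx_representation R W n),
        [/\ is_root_system Phi, is_base Phi r, mx_faithful rho &
            forall a, rho (s a) = reflmx (r a)]].

(* The matrix of the operator s_a on CV attached to (V, m, tau), in the row
   vector convention of mathcomp: row i is the image of the basis vector
   enum_val i.  Entry (u,v) is the coefficient of u in s_a(v). *)
Definition wgraph_mx (C : fieldType) (D V : finType) (m : V -> V -> C)
    (tau : V -> {set D}) (a : D) : 'M[C]_#|V| :=
  \matrix_(i, j)
    let v := enum_val i in let u := enum_val j in
    if a \in tau v then - (i == j)%:R
    else (i == j)%:R - (if a \in tau u then m u v else 0).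

Definition wgraph_repr (C : fieldType) (gT : finGroupType) (W : {group gT})
    (D V : finType) (s : D -> gT) (m : V -> V -> C) (tau : V -> {set D})
    (rG : mx_representation C W #|V|) : Prop :=
  forall a, rG (s a) = wgraph_mx m tau a.

Definition tau_invariant (D V : finType) (tau : V -> {set D}) : {set {set D}} :=
  [set tau v | v : V].

(* For J a set of simple roots, let E_J be the common (-1)-eigenspace of the
   s_a, a in J.  In the basis V of a weak W-graph, s_a + 1 kills v when
   a \in tau v and doubles the v-coordinate otherwise, so E_J is spanned by the
   v with J \subset tau v.  Hence #{v | J \subset tau v} = dim E_J depends only
   on the isomorphism class of CV, and inverting these sums over supersets J
   recovers #{v | tau v = K} for every K, which is positive exactly when K is in
   the tau-invariant. *)

From HB Require Import structures.
From mathcomp Require Import all_boot all_order all_algebra all_fingroup.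
From mathcomp Require Import mxrepresentation.
From mathcomp Require Import complex reals.
Set Implicit Arguments. Unset Strict Implicit. Unset Printing Implicit Defensive.
Import Order.TTheory GRing.Theory Num.Theory.
Local Open Scope ring_scope.

Lemma superset_sum_inj (D : finType) (f g : {set D} -> nat) :
  (forall J : {set D},
     \sum_(K : {set D} | J \subset K) f K = \sum_(K : {set D} | J \subset K) g K)%N ->
  f =1 g.
Proof.
move=> eq_sum K; elim: {K}_.+1 {-2}K (ltnSn #|~: K|) => // k IH K ltK.
have eq_strict : (\sum_(L : {set D} | (K \subset L) && (L != K)) f L =
                  \sum_(L : {set D} | (K \subset L) && (L != K)) g L)%N.
  apply: eq_bigr => L /andP [KL neLK]; apply: IH.
  have : ~: L \proper ~: K by rewrite properC properEneq eq_sym neLK KL.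
  by move/proper_card/leq_trans; apply.
have := eq_sum K; rewrite (bigD1 K) //= [in X in _ = X -> _](bigD1 K) //=.
by rewrite eq_strict => /addIn.
Qed.


Section TauFibres.
Variables (D V : finType) (tau : V -> {set D}).

Lemma card_superset_fibres (J : {set D}) :
  #|[set v | J \subset tau v]| =
  (\sum_(K : {set D} | J \subset K) #|[set v | tau v == K]|)%N.
Proof.
rewrite -sum1_card (eq_bigl (fun v => J \subset tau v)) => [|v]; last by rewrite inE.
rewrite (partition_big tau (fun K => J \subset K)) //=.
apply: eq_bigr => K JK; rewrite -sum1_card; apply: eq_bigl => v; rewrite inE.
by case: eqP => [->|]; rewrite ?JK ?andbF.
Qed.

Lemma mem_tau_invariant (K : {set D}) :
  (K \in tau_invariant tau) = (0 < #|[set v | tau v == K]|)%N.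
Proof.
apply/imsetP/card_gt0P => [[v _ ->]|[v]]; first by exists v; rewrite inE.
by rewrite inE => /eqP <-; exists v.
Qed.

End TauFibres.

Section CoordSubspace.
Variables (F : fieldType) (n : nat) (S : {set 'I_n}).

Definition coord_subspace : 'M[F]_(#|S|, n) := rowsub enum_val 1%:M.

Lemma mxrank_coord_subspace : \rank coord_subspace = #|S|.
Proof.
apply/eqP/row_freeP; exists coord_subspace^T; apply/matrixP => r r'.
by rewrite mul_rowsub_mx mul1mx !mxE (inj_eq enum_val_inj) eq_sym.
Qed.

Lemma sub_coord_subspace (x : 'rV[F]_n) :
  (x <= coord_subspace)%MS = ([set i | x 0 i != 0] \subset S).
Proof.
apply/idP/subsetP => [/submxP [y ->] j | suppS].
  rewrite inE; apply: contraR => jS; rewrite mxE big1 // => r _.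
  rewrite !mxE; case: eqP => [e|_]; last by rewrite mulr0.
  by move: (enum_valP r); rewrite e (negbTE jS).
rewrite [x]matrix_sum_delta big_ord1 summx_sub // => j _.
have [->|nz] := eqVneq (x 0 j) 0; first by rewrite scale0r sub0mx.
have jS : j \in S by apply: suppS; rewrite inE.
rewrite scalemx_sub // -(enum_rankK_in jS jS) -row1 -row_rowsub; exact: row_sub.
Qed.

End CoordSubspace.

Section CommonEigenspace.
Variables (F : fieldType) (D : finType).

Definition common_eigenspace n (A : D -> 'M[F]_n) (J : {set D}) (c : F) :=
  (\bigcap_(a in J) eigenspace (A a) c)%MS.

Lemma mxrank_common_eigenspace_intertwine n1 n2 (A1 : D -> 'M[F]_n1)
    (A2 : D -> 'M[F]_n2) (B : 'M[F]_(n1, n2)) J c :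
  row_free B -> (forall a, A1 a *m B = B *m A2 a) ->
  (\rank (common_eigenspace A1 J c) <= \rank (common_eigenspace A2 J c))%N.
Proof.
move=> freeB A1B; rewrite -(mxrankMfree _ freeB); apply: mxrankS.
apply/sub_bigcapmxP => a aJ; apply/eigenspaceP.
have /eigenspaceP E1c : (common_eigenspace A1 J c <= eigenspace (A1 a) c)%MS.
  exact: bigcapmx_inf aJ (submx_refl _).
by rewrite -mulmxA -A1B mulmxA E1c scalemxAl.
Qed.

Lemma mxrank_common_eigenspace_rsim (gT : finGroupType) (G : {group gT})
    n1 n2 (rG1 : mx_representation F G n1) (rG2 : mx_representation F G n2)
    (s : D -> gT) J c :
  (forall a, s a \in G) -> mx_rsim rG1 rG2 ->
  \rank (common_eigenspace (fun a => rG1 (s a)) J c) =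
  \rank (common_eigenspace (fun a => rG2 (s a)) J c).
Proof.
move=> sG rsim12; apply/eqP; rewrite eqn_leq.
case: rsim12 (mx_rsim_sym rsim12) => [B _ freeB rG1B] [B' _ freeB' rG2B'].
apply/andP; split.
- by apply: mxrank_common_eigenspace_intertwine freeB _ => a; exact: rG1B.
- by apply: mxrank_common_eigenspace_intertwine freeB' _ => a; exact: rG2B'.
Qed.

End CommonEigenspace.

Section WGraphEigenspaces.
Variables (F : fieldType) (D V : finType) (m : V -> V -> F) (tau : V -> {set D}).
Hypothesis two_neq0 : 2 != 0 :> F.

Let A := wgraph_mx m tau.

Lemma wgraph_mxD1_in_tau a i j : a \in tau (enum_val i) -> (A a + 1%:M) i j = 0.
Proof. by move=> ai; rewrite !mxE /= ai addNr. Qed.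

Lemma wgraph_mxD1_notin_tau a i j :
  a \notin tau (enum_val j) -> (A a + 1%:M) i j = (i == j)%:R * 2.
Proof.
move=> aj; rewrite !mxE /= (negbTE aj) subr0.
case: (eqVneq i j) => [eij|neij]; first by subst i; rewrite (negbTE aj) mul1r.
by case: ifP; rewrite ?oppr0 mul0r ?addr0.
Qed.

Lemma sub_wgraph_eigenspaceN1 a (x : 'rV[F]_#|V|) :
  (x <= eigenspace (A a) (-1))%MS =
  ([set i | x 0 i != 0] \subset [set i | a \in tau (enum_val i)]).
Proof.
rewrite /eigenspace raddfN opprK sub_kermx; apply/eqP/subsetP => [x0 i | supp].
  rewrite !inE => xi0; apply: contraR xi0 => ai.
  have := congr1 (fun y : 'rV_#|V| => y 0 i) x0.
  rewrite mxE (bigD1 i) //= big1 => [|j nji]; last first.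
    by rewrite wgraph_mxD1_notin_tau // (negbTE nji) mul0r mulr0.
  rewrite wgraph_mxD1_notin_tau // eqxx mul1r addr0 mxE => /eqP.
  by rewrite mulf_eq0 (negbTE two_neq0) orbF.
apply/rowP => j; rewrite !mxE big1 // => i _.
have [-> |xi0] := eqVneq (x 0 i) 0; first by rewrite mul0r.
by rewrite wgraph_mxD1_in_tau ?mulr0 //; have := supp i; rewrite !inE; apply.
Qed.

Lemma sub_wgraph_common_eigenspaceN1 J (x : 'rV[F]_#|V|) :
  (x <= common_eigenspace A J (-1))%MS =
  ([set i | x 0 i != 0] \subset [set i | J \subset tau (enum_val i)]).
Proof.
apply/sub_bigcapmxP/subsetP => [sub i xi | supp a aJ].
  rewrite inE; apply/subsetP => a aJ.
  by have := sub a aJ; rewrite sub_wgraph_eigenspaceN1 => /subsetP/(_ i xi); rewrite inE.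
rewrite sub_wgraph_eigenspaceN1; apply/subsetP => i /supp.
by rewrite !inE => /subsetP; apply.
Qed.

Lemma mxrank_wgraph_common_eigenspaceN1 J :
  \rank (common_eigenspace A J (-1)) = #|[set v | J \subset tau v]|.
Proof.
rewrite (eqmx_rank (B := coord_subspace F [set i | J \subset tau (enum_val i)])); last first.
  by apply/rV_eqP => x; rewrite sub_wgraph_common_eigenspaceN1 sub_coord_subspace.
rewrite mxrank_coord_subspace -[RHS](on_card_preimset (onW_bij _ (@enum_val_bij V))).
by apply: eq_card => i; rewrite !inE.
Qed.

End WGraphEigenspaces.

Theorem corollary2p11 (R : realType) (gT : finGroupType) (W : {group gT})
    (D : finType) (s : D -> gT) (HW : is_Weyl_group W s)
    (V1 V2 : finType) (m1 : V1 -> V1 -> R[i]) (m2 : V2 -> V2 -> R[i])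
    (tau1 : V1 -> {set D}) (tau2 : V2 -> {set D})
    (rG1 : mx_representation R[i] W #|V1|) (rG2 : mx_representation R[i] W #|V2|)
    (H1 : wgraph_repr s m1 tau1 rG1) (H2 : wgraph_repr s m2 tau2 rG2)
    (Hiso : mx_rsim rG1 rG2) :
  tau_invariant tau1 = tau_invariant tau2.
Proof.
have [sW _ _] := HW.
have two_neq0 : 2 != 0 :> R[i] by rewrite pnatr_eq0.
have card_superset_eq (J : {set D}) :
    #|[set v | J \subset tau1 v]| = #|[set v | J \subset tau2 v]|.
  rewrite -(mxrank_wgraph_common_eigenspaceN1 m1 _ two_neq0).
  rewrite -(mxrank_wgraph_common_eigenspaceN1 m2 _ two_neq0).
  rewrite /common_eigenspace; under eq_bigr => a _ do rewrite -H1.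
  under [in RHS]eq_bigr => a _ do rewrite -H2.
  exact: (mxrank_common_eigenspace_rsim J (-1) sW Hiso).
have card_fibre_eq :
    (fun K => #|[set v | tau1 v == K]|) =1 (fun K => #|[set v | tau2 v == K]|).
  apply: superset_sum_inj => J; rewrite -!card_superset_fibres; exact: card_superset_eq.
by apply/setP => K; rewrite !mem_tau_invariant card_fibre_eq.
Qed.
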